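(* In the setting described in the context, assume the non-degeneracy condition (for every $i\neq i'$ there exists $n$ with $\Lambda_{ni}\neq\Lambda_{ni'}$), and let $U_\circ$ be an exact joint triangularizer of $\{M_n\}$ and $U=U_\circ e^{\alpha X}$ ($X=-X^T$, $\|X\|=1$, $\alpha>0$) an approximate joint triangularizer of $\{\hat M_n\}$ whose $\alpha$ satisfies $\alpha\le2\sqrt2\,\sigma\|\tilde T^{-1}\|_2\sqrt{\sum_n\|M_n\|^2}\sqrt{\sum_n\|W_n\|^2}+O((\alpha+\sigma)^2)$, with $\tilde T=\sum_n\tilde t_n^T\tilde t_n$, $\tilde t_n=P_{\rm low}(1\otimes U_\circ^TM_n^TU_\circ-U_\circ^TM_nU_\circ\otimes1)P_{\rm low}^T$. For all $n$ and $i$ let $\hat\lambda_i(\hat M_n)=[U^T\hat M_nU]_{ii}$ and $\lambda_i(M_n)=[U_\circ^TM_nU_\circ]_{ii}$. Then for all $n=1,\dots,N$ and $i=1,\dots,d$, $$|\hat\lambda_i(\hat M_n)-\lambda_i(M_n)|\le2\alpha\|M_n\|+\sigma\|W_n\|+O(\alpha^2).$$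
   Context: All matrices are real; $\|\cdot\|$ is the Frobenius norm, $\|\cdot\|_2$ the spectral norm. ${\rm low}(A)$ is the strictly lower-triangular part of $A$; $\otimes$ the Kronecker product; $1$ the identity. $P_{\rm low}\in\{0,1\}^{\frac{d(d-1)}2\times d^2}$ has as rows the standard basis row vectors of $\mathbb R^{d^2}$ selecting (in increasing order) the entries of the column-wise vectorization of a matrix corresponding to its strictly lower-triangular entries. Model: $\hat M_n=M_n+\sigma W_n$, $M_n=V\,{\rm diag}(\Lambda_{n1},\dots,\Lambda_{nd})V^{-1}$, $n=1,\dots,N$, $V$ real invertible, $\Lambda_{ni}$ real, $\sigma>0$, $\|W_n\|\le1$. Exact joint triangularizer of $\{M_n\}$: orthogonal $U_\circ$ with ${\rm low}(U_\circ^TM_nU_\circ)=0$ for all $n$. Approximate joint triangularizer of $\{\hat M_n\}$: solution (stationary point) of $\min_{U\in\mathbb O(d)}\sum_n\|{\rm low}(U^T\hat M_nU)\|^2$. Inequalities are first-order, valid up to the indicated second-order terms. *)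

From HB Require Import structures.
From mathcomp Require Import all_boot all_order all_algebra.
From mathcomp Require Import all_classical all_reals all_analysis.
Set Implicit Arguments. Unset Strict Implicit. Unset Printing Implicit Defensive.
Import Order.TTheory GRing.Theory Num.Theory.
Import numFieldNormedType.Exports.
Local Open Scope classical_set_scope.
Local Open Scope ring_scope.

Section Defs.
Variable R : realType.

Definition frob (m n : nat) (A : 'M[R]_(m, n)) : R :=
  Num.sqrt (\sum_(i < m) \sum_(j < n) A i j ^+ 2).

Definition specnorm (m n : nat) (A : 'M[R]_(m, n)) : R :=
  sup [set frob (A *m x) | x in [set x : 'cV[R]_n | frob x <= 1]].

Definition low (d : nat) (A : 'M[R]_d) : 'M[R]_d :=
  \matrix_(i, j) (if (j < i)%N then A i j else 0).

(* entry (i,j) of A given natural-number indices (0 if out of range) *)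
Definition mxat (m n : nat) (A : 'M[R]_(m, n)) (i j : nat) : R :=
  \sum_(i' < m | val i' == i) \sum_(j' < n | val j' == j) A i' j'.

(* Kronecker product of two d x d matrices; block row/column index k
   corresponds to (k %/ d, k %% d) *)
Definition kron (d : nat) (A B : 'M[R]_d) : 'M[R]_(d * d) :=
  \matrix_(k, l) (mxat A (k %/ d) (l %/ d) * mxat B (k %% d) (l %% d)).

(* Column-wise vectorization: entry (i,j) of a d x d matrix sits at index
   i + d * j; it is strictly lower-triangular iff j < i, i.e.
   k %/ d < k %% d.  The list of such indices in increasing order: *)
Definition lowidx (d : nat) : seq nat :=
  [seq k <- iota 0 (d * d) | (k %/ d < k %% d)%N].

Definition Plow (d : nat) : 'M[R]_(d * (d - 1) %/ 2, d * d) :=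
  \matrix_(r, k) ((nth 0%N (lowidx d) r == val k)%:R).

Definition expm (d : nat) (A : 'M[R]_d) : 'M[R]_d :=
  limn (series (fun k : nat => (k`!%:R)^-1 *: A ^+ k)).

Definition orthogonal (d : nat) (U : 'M[R]_d) : Prop := U^T *m U = 1%:M.

Definition jt_obj (d N : nat) (Mh : 'I_N -> 'M[R]_d) (U : 'M[R]_d) : R :=
  \sum_(n < N) frob (low (U^T *m Mh n *m U)) ^+ 2.

(* stationary point of the objective on O(d): orthogonal, and the derivative
   along every geodesic t |-> U exp(tY), Y skew, vanishes at t = 0 *)
Definition approx_joint_triangularizer (d N : nat) (Mh : 'I_N -> 'M[R]_d)
    (U : 'M[R]_d) : Prop :=
  orthogonal U /\
  forall Y : 'M[R]_d, Y^T = - Y ->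
    is_derive (0 : R) (1 : R) (fun t : R => jt_obj Mh (U *m expm (t *: Y))) 0.

Definition exact_joint_triangularizer (d N : nat) (M : 'I_N -> 'M[R]_d)
    (U : 'M[R]_d) : Prop :=
  orthogonal U /\ forall n, low (U^T *m M n *m U) = 0.

Definition ttilde (d : nat) (U0 Mn : 'M[R]_d) : 'M[R]_(d * (d - 1) %/ 2) :=
  Plow d *m (kron 1%:M (U0^T *m Mn^T *m U0) - kron (U0^T *m Mn *m U0) 1%:M)
    *m (Plow d)^T.

Definition Ttilde (d N : nat) (U0 : 'M[R]_d) (M : 'I_N -> 'M[R]_d)
    : 'M[R]_(d * (d - 1) %/ 2) :=
  \sum_(n < N) (ttilde U0 (M n))^T *m ttilde U0 (M n).

End Defs.

From HB Require Import structures.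
From mathcomp Require Import all_boot all_order all_algebra.
From mathcomp Require Import all_classical all_reals all_analysis.
From mathcomp Require Import ring lra.
Import Order.TTheory GRing.Theory Num.Theory.
Import numFieldNormedType.Exports.
Set Implicit Arguments.
Unset Strict Implicit.
Unset Printing Implicit Defensive.
Local Open Scope ring_scope.

(* Write U = U0 e^(aX) = U0 + E.  As U0 is orthogonal, the i-th column of E has
   the norm of the i-th column of e^(aX) - 1, which is at most a + O(a^2) by the
   series bound |e^A - 1 - A| = O(|A|^2).  By Cauchy-Schwarz, a diagonal entry
   (P^T M Q)_ii is bounded by the norms of the i-th columns of P and Q times
   |M|_F; expanding (U0 + E)^T M (U0 + E) then yields 2a|M| + O(a^2), and the
   orthogonality of U bounds the noise term by sigma |W|. *)

Section EuclideanNorm.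
Variables (R : realType) (I : finType).
Implicit Types (a b : I -> R).

Definition enorm a : R := Num.sqrt (\sum_i a i ^+ 2).

Lemma sum_sqr_ge0 a : 0 <= \sum_i a i ^+ 2.
Proof. by apply: sumr_ge0 => i _; exact: sqr_ge0. Qed.

Lemma enorm_ge0 a : 0 <= enorm a.
Proof. exact: sqrtr_ge0. Qed.

Lemma normr_le_enorm a i : `|a i| <= enorm a.
Proof.
rewrite -sqrtr_sqr ler_sqrt ?sum_sqr_ge0 // (bigD1 i) //= lerDl.
by apply: sumr_ge0 => j _; exact: sqr_ge0.
Qed.

Lemma enorm_sqr a : enorm a ^+ 2 = \sum_i a i ^+ 2.
Proof. exact/sqr_sqrtr/sum_sqr_ge0. Qed.

(* Lagrange's identity: the defect is a sum of squares. *)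
Lemma cauchy_schwarz a b :
  (\sum_i a i * b i) ^+ 2 <= (\sum_i a i ^+ 2) * (\sum_i b i ^+ 2).
Proof.
have lagrange : \sum_i \sum_j (a i * b j - a j * b i) ^+ 2 =
    (\sum_i a i ^+ 2) * (\sum_j b j ^+ 2) + (\sum_j b j ^+ 2) * (\sum_i a i ^+ 2)
    - 2 * ((\sum_i a i * b i) * (\sum_j a j * b j)).
  rewrite !big_distrlr /= mulr_sumr -big_split -sumrB; apply: eq_bigr => i _.
  rewrite mulr_sumr -big_split -sumrB; apply: eq_bigr => j _ /=; ring.
have : 0 <= \sum_i \sum_j (a i * b j - a j * b i) ^+ 2.
  by apply: sumr_ge0 => i _; exact: sum_sqr_ge0.
by rewrite lagrange expr2; lra.
Qed.

Lemma normr_sum_mul_le a b : `|\sum_i a i * b i| <= enorm a * enorm b.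
Proof.
rewrite -sqrtrM ?sum_sqr_ge0 // -sqrtr_sqr ler_sqrt ?cauchy_schwarz //.
exact: mulr_ge0 (sum_sqr_ge0 _) (sum_sqr_ge0 _).
Qed.

Lemma enormD_le a b : enorm (fun i => a i + b i) <= enorm a + enorm b.
Proof.
rewrite -(ler_pXn2r (_ : 0 < 2)%N) ?nnegrE ?addr_ge0 ?enorm_ge0 //.
rewrite sqrrD !enorm_sqr.
under eq_bigr do rewrite sqrrD.
rewrite !big_split /= mulr2n.
have := normr_sum_mul_le a b; have := ler_norm (\sum_i a i * b i); lra.
Qed.

Lemma enormZ c a : enorm (fun i => c * a i) = `|c| * enorm a.
Proof.
rewrite /enorm -sqrtr_sqr -sqrtrM ?sqr_ge0 // mulr_sumr.
by under eq_bigr do rewrite exprMn.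
Qed.

Lemma enorm_le_card c a :
  0 <= c -> (forall i, `|a i| <= c) -> enorm a <= #|I|%:R * c.
Proof.
move=> c_ge0 a_le; rewrite -[_ * c]ger0_norm ?mulr_ge0 // -sqrtr_sqr.
rewrite ler_sqrt ?sqr_ge0 //; apply: le_trans (_ : \sum_(i : I) c ^+ 2 <= _).
  apply: ler_sum => i _; rewrite -real_normK ?num_real //.
  by rewrite lerXn2r ?nnegrE.
rewrite sumr_const -[_ *+ _]mulr_natl exprMn; apply: ler_wpM2r; first exact: sqr_ge0.
rewrite -natrX ler_nat.
by case: #|I| => // n; rewrite leq_pmulr.
Qed.

End EuclideanNorm.

Section MaxNorm.
Variable R : realType.

Lemma mx_norm_entry_le m n (A : 'M[R]_(m, n)) i j : `|A i j| <= `|A|.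
Proof.
rewrite [leRHS]/Num.norm /= mx_normrE.
by apply/bigmax_geP; right; exists (i, j).
Qed.

Lemma mx_norm_le_entries m n (A : 'M[R]_(m, n)) c :
  0 <= c -> (forall i j, `|A i j| <= c) -> `|A| <= c.
Proof.
move=> c_ge0 A_le; rewrite [leLHS]/Num.norm /= mx_normrE.
by apply/bigmax_leP; split => // -[i j] _; exact: A_le.
Qed.

Variable d : nat.
Implicit Types A B : 'M[R]_d.

Lemma mx_norm_mulmx_le A B : `|A *m B| <= d%:R * `|A| * `|B|.
Proof.
apply: mx_norm_le_entries => [|i j]; first by rewrite !mulr_ge0.
rewrite mxE; apply: le_trans (ler_norm_sum _ _ _) _.
apply: le_trans (_ : \sum_(k < d) `|A| * `|B| <= _).
  by apply: ler_sum => k _; rewrite normrM ler_pM ?mx_norm_entry_le.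
by rewrite sumr_const card_ord mulr_natl mulrnAl.
Qed.

Lemma mx_norm_exprmx_le A k : `|A ^+ k| <= (d%:R * `|A|) ^+ k.
Proof.
elim: k => [|k IHk].
  apply: mx_norm_le_entries => // i j; rewrite expr0 mxE.
  by case: (i == j); rewrite ?normr1 ?normr0.
rewrite exprSr -mulmxE exprSr; apply: le_trans (mx_norm_mulmx_le _ _) _.
by rewrite -mulrA mulrCA; apply: ler_wpM2r => //; rewrite mulr_ge0.
Qed.

End MaxNorm.

Lemma geometric_tail_le (R : realFieldType) (t : R) n :
  0 <= t -> t <= 2^-1 -> \sum_(0 <= k < n) t ^+ k.+2 <= 2 * t ^+ 2.
Proof.
move=> t_ge0 t_le.
have t_lt1 : t < 1 by apply: le_lt_trans t_le _; rewrite invf_lt1 ?ltr1n.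
have -> : \sum_(0 <= k < n) t ^+ k.+2 = series (geometric (t ^+ 2) t) n.
  by rewrite seriesEnat; apply: eq_bigr => k _; rewrite /geometric /= -exprD add2n.
rewrite geometric_seriesE ?lt_eqF //=.
rewrite ler_pdivrMr ?subr_gt0 //; have := exprn_ge0 n t_ge0; nra.
Qed.

Section MatrixExponential.
Variable R : realType.

(* The library's [normed_cvg] does not apply here: the complete and the normed
   structures of ['M[R]_(m, n)] are not joined into a [completeNormedModType]. *)
Lemma mx_normed_cvg m n (u_ : 'M[R]_(m, n) ^nat) :
  cvgn [normed series u_] -> cvgn (series u_).
Proof.
move=> /cauchy_cvgP/cauchy_seriesP u_ncvg.
apply/cauchy_cvgP/cauchy_seriesP => e /u_ncvg.
apply: filterS => n' /=; rewrite ger0_norm ?sumr_ge0 //.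
by apply: le_lt_trans; exact: ler_norm_sum.
Qed.

Variable d : nat.

Lemma expm_sub_linear_le (A : 'M[R]_d) : d%:R * `|A| <= 2^-1 ->
  `|expm A - (1%:M + A)| <= 2 * (d%:R * `|A|) ^+ 2.
Proof.
set t := d%:R * `|A| => t_le; have t_ge0 : 0 <= t by rewrite mulr_ge0.
set f := fun k => (k`!%:R)^-1 *: A ^+ k.
have f_le k : `|f k| <= t ^+ k.
  rewrite normrZ ger0_norm ?invr_ge0 // -[leRHS]mul1r.
  by rewrite ler_pM ?invr_ge0 ?mx_norm_exprmx_le ?invf_le1 ?ler1n ?ltr0n ?fact_gt0.
have f_cvg : cvgn (series f).
  apply: mx_normed_cvg; apply: (@series_le_cvg _ _ (geometric 1 t)).
  - by move=> k; exact: normr_ge0.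
  - by move=> k; exact: geometric_ge0.
  - by move=> k; rewrite /geometric /= mul1r.
  apply: is_cvg_geometric_series; rewrite ger0_norm //.
  by apply: le_lt_trans t_le _; rewrite invf_lt1 ?ltr1n.
have partial_le n : `|series f n.+2 - (1%:M + A)| <= 2 * t ^+ 2.
  rewrite seriesEnat /= !big_nat_recl //.
  have -> : f 0%N = 1%:M by rewrite /f expr0 fact0 invr1 scale1r.
  have -> : f 1%N = A by rewrite /f expr1 (_ : 1`! = 1)%N // invr1 scale1r.
  rewrite opprD addrACA subrr add0r addrC addKr; apply: le_trans (ler_norm_sum _ _ _) _.
  apply: le_trans (geometric_tail_le n t_ge0 t_le).
  by apply: ler_sum => k _; exact: f_le.
apply: (cvgr_to_le (cvg_norm (cvgB f_cvg (cvg_cst (1%:M + A))))).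
near=> n; have n_ge2 : (2 <= n)%N by near: n; exact: nbhs_infty_ge.
by rewrite -(subnK n_ge2) addn2; exact: partial_le.
Unshelve. all: by end_near.
Qed.

End MatrixExponential.

Section ColumnNorm.
Variables (R : realType) (d : nat).
Implicit Types (A B M U W : 'M[R]_d) (i : 'I_d).

Definition colnorm A i : R := enorm (fun j => A j i).

Lemma colnorm_ge0 A i : 0 <= colnorm A i.
Proof. exact: enorm_ge0. Qed.

Lemma colnormE A i : colnorm A i = Num.sqrt ((A^T *m A) i i).
Proof. by rewrite mxE; congr Num.sqrt; apply: eq_bigr => j _; rewrite mxE expr2. Qed.

Lemma colnorm_mul_orthogonal U A i :
  U^T *m U = 1%:M -> colnorm (U *m A) i = colnorm A i.
Proof.
by move=> U_orth; rewrite !colnormE trmx_mul -mulmxA (mulmxA U^T) U_orth mul1mx.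
Qed.

Lemma colnorm_orthogonal U i : U^T *m U = 1%:M -> colnorm U i = 1.
Proof. by move=> U_orth; rewrite colnormE U_orth mxE eqxx sqrtr1. Qed.

Lemma colnormD_le A B i : colnorm (A + B) i <= colnorm A i + colnorm B i.
Proof.
rewrite /colnorm; have -> : (fun j => (A + B) j i) = (fun j => A j i + B j i).
  by apply/funext => j; rewrite mxE.
exact: enormD_le.
Qed.

Lemma colnormZ c A i : colnorm (c *: A) i = `|c| * colnorm A i.
Proof.
rewrite /colnorm; have -> : (fun j => (c *: A) j i) = (fun j => c * A j i).
  by apply/funext => j; rewrite mxE.
exact: enormZ.
Qed.

Lemma colnorm_le_frob A i : colnorm A i <= frob A.
Proof.
rewrite /colnorm /enorm /frob ler_sqrt; last by apply: sumr_ge0 => j _; exact: sum_sqr_ge0.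
apply: ler_sum => j _; rewrite (bigD1 i) //= lerDl.
by apply: sumr_ge0 => k _; exact: sqr_ge0.
Qed.

Lemma colnorm_le_mx_norm A i : colnorm A i <= d%:R * `|A|.
Proof.
by rewrite -[d in d%:R]card_ord enorm_le_card // => j; exact: mx_norm_entry_le.
Qed.

Lemma normr_diag_bilinear_le A M B i a b :
  colnorm A i <= a -> colnorm B i <= b -> `|(A^T *m M *m B) i i| <= a * b * frob M.
Proof.
move=> A_le B_le.
have -> : (A^T *m M *m B) i i = \sum_(p : 'I_d * 'I_d) M p.1 p.2 * (A p.1 i * B p.2 i).
  rewrite -(pair_bigA _ (fun j k => M j k * (A j i * B k i))) mxE exchange_big /=.
  apply: eq_bigr => j _; rewrite mxE mulr_suml; apply: eq_bigr => k _.
  by rewrite mxE mulrCA mulrA.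
apply: le_trans (normr_sum_mul_le _ _) _.
have -> : enorm (fun p : 'I_d * 'I_d => M p.1 p.2) = frob M by rewrite /frob /enorm pair_bigA.
have -> : enorm (fun p : 'I_d * 'I_d => A p.1 i * B p.2 i) = colnorm A i * colnorm B i.
  rewrite /colnorm /enorm -sqrtrM ?sum_sqr_ge0 // big_distrlr /= pair_bigA /=.
  by under eq_bigr do rewrite exprMn.
rewrite mulrC.
by apply: ler_wpM2r; [exact: sqrtr_ge0 | apply: ler_pM; rewrite ?colnorm_ge0].
Qed.

Lemma normr_diag_congr_sub_le U U0 M i e :
  colnorm U0 i <= 1 -> colnorm (U - U0) i <= e ->
  `|(U^T *m M *m U) i i - (U0^T *m M *m U0) i i| <= (2 * e + e ^+ 2) * frob M.
Proof.
move=> U0_le E_le; have -> : U = U0 + (U - U0) by rewrite addrC subrK.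
move: (U - U0) E_le => E E_le.
have entryD A B : (A + B) i i = A i i + B i i by rewrite mxE.
rewrite (raddfD (@trmx R d d)) !mulmxDl !mulmxDr !entryD.
set a := (U0^T *m M *m U0) i i; set x := (U0^T *m M *m E) i i.
set y := (E^T *m M *m U0) i i; set z := (E^T *m M *m E) i i.
have -> : a + x + (y + z) - a = x + y + z by ring.
have := normr_diag_bilinear_le M U0_le E_le; have := normr_diag_bilinear_le M E_le U0_le.
have := normr_diag_bilinear_le M E_le E_le; rewrite -/x -/y -/z => z_le y_le x_le.
apply: le_trans (ler_normD _ _) _; apply: le_trans (lerD (ler_normD _ _) (lexx _)) _.
lra.
Qed.

Lemma normr_diag_perturb_le U U0 M W i sigma e :
  0 <= sigma -> U^T *m U = 1%:M -> colnorm U0 i <= 1 -> colnorm (U - U0) i <= e ->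
  `|(U^T *m (M + sigma *: W) *m U) i i - (U0^T *m M *m U0) i i|
    <= (2 * e + e ^+ 2) * frob M + sigma * frob W.
Proof.
move=> sigma_ge0 U_orth U0_le E_le.
have U_le : colnorm U i <= 1 by rewrite colnorm_orthogonal.
have noise := normr_diag_bilinear_le W U_le U_le; rewrite !mul1r in noise.
have entryD A B : (A + B) i i = A i i + B i i by rewrite mxE.
have entryZ c A : (c *: A) i i = c * A i i by rewrite mxE.
rewrite mulmxDr mulmxDl -scalemxAr -scalemxAl entryD entryZ addrAC.
apply: le_trans (ler_normD _ _) _; apply: lerD; first exact: normr_diag_congr_sub_le.
by rewrite normrM ger0_norm // ler_wpM2l.
Qed.

Lemma mx_norm_le_frob A : `|A| <= frob A.
Proof.
apply: mx_norm_le_entries => [|j k]; first exact: sqrtr_ge0.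
exact: le_trans (normr_le_enorm _ j) (colnorm_le_frob A k).
Qed.

Lemma colnorm_expm_sub1_le X a i : frob X <= 1 -> 0 <= a -> d%:R * a <= 2^-1 ->
  colnorm (expm (a *: X) - 1%:M) i <= a + 2 * d%:R ^+ 3 * a ^+ 2.
Proof.
move=> X_le a_ge0 a_small.
have aX_le : `|a *: X| <= a.
  by rewrite normrZ ger0_norm // ler_piMr // (le_trans (mx_norm_le_frob X) X_le).
have -> : expm (a *: X) - 1%:M = a *: X + (expm (a *: X) - (1%:M + a *: X)).
  by rewrite addrA (addrC (a *: X)) (addrC 1%:M) addrKA.
apply: le_trans (colnormD_le _ _ _) _; apply: lerD.
  by rewrite colnormZ ger0_norm // ler_piMr // (le_trans (colnorm_le_frob X i) X_le).
apply: le_trans (colnorm_le_mx_norm _ _) _.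
have aX_small : d%:R * `|a *: X| <= 2^-1 by apply: le_trans a_small; rewrite ler_wpM2l.
apply: le_trans (ler_wpM2l (ler0n _ _) (expm_sub_linear_le aX_small)) _.
rewrite [leRHS](_ : _ = d%:R * (2 * (d%:R * a) ^+ 2)); last by ring.
apply: ler_wpM2l => //; apply: ler_wpM2l => //.
by rewrite lerXn2r ?nnegrE ?mulr_ge0 ?ler_wpM2l.
Qed.

End ColumnNorm.

Lemma quadratic_coef_le (R : realFieldType) (K a : R) :
  0 <= K -> 0 <= a -> a <= 1 ->
  2 * (a + K * a ^+ 2) + (a + K * a ^+ 2) ^+ 2
    <= 2 * a + (2 * K + (1 + K) ^+ 2) * a ^+ 2.
Proof.
move=> K_ge0 a_ge0 a_le1.
have Ka2_le : K * a ^+ 2 <= K * a by rewrite ler_wpM2l // expr2 ler_piMl.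
have : (a + K * a ^+ 2) ^+ 2 <= ((1 + K) * a) ^+ 2.
  by rewrite lerXn2r ?nnegrE ?addr_ge0 ?mulr_ge0 ?exprn_ge0 //; lra.
rewrite exprMn; lra.
Qed.

Theorem lemma12 (R : realType) (d N : nat) (V : 'M[R]_d)
    (Lam : 'I_N -> 'I_d -> R) (M : 'I_N -> 'M[R]_d) (U0 : 'M[R]_d) :
  V \in unitmx ->
  (forall n, M n = V *m diag_mx (\row_i Lam n i) *m invmx V) ->
  (forall i i' : 'I_d, i != i' -> exists n, Lam n i != Lam n i') ->
  exact_joint_triangularizer M U0 ->
  forall C1 : R, 0 <= C1 ->
  exists C : R, exists delta : R, 0 < delta /\
  forall (sigma : R) (W : 'I_N -> 'M[R]_d) (X : 'M[R]_d) (alpha : R),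
    0 < sigma -> (forall n, frob (W n) <= 1) ->
    X^T = - X -> frob X = 1 -> 0 < alpha -> alpha < delta ->
    approx_joint_triangularizer (fun n => M n + sigma *: W n)
      (U0 *m expm (alpha *: X)) ->
    alpha <= 2 * Num.sqrt 2 * sigma * specnorm (invmx (Ttilde U0 M))
             * Num.sqrt (\sum_(n < N) frob (M n) ^+ 2)
             * Num.sqrt (\sum_(n < N) frob (W n) ^+ 2)
             + C1 * (alpha + sigma) ^+ 2 ->
    forall (n : 'I_N) (i : 'I_d),
      let U := U0 *m expm (alpha *: X) in
      `| (U^T *m (M n + sigma *: W n) *m U) i i - (U0^T *m M n *m U0) i i |
        <= 2 * alpha * frob (M n) + sigma * frob (W n) + C * alpha ^+ 2.
Proof.
move=> _ _ _ [U0_orth _] C1 _.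
set K : R := 2 * d%:R ^+ 3; set c := 2 * K + (1 + K) ^+ 2.
have K_ge0 : 0 <= K by rewrite mulr_ge0 ?exprn_ge0.
exists (c * \sum_(n < N) frob (M n)), (2 * (d%:R + 1))^-1.
split; first by rewrite invr_gt0 mulr_gt0 // ltr_wpDl.
move=> sigma W X alpha sigma_gt0 _ _ X_unit alpha_gt0 alpha_lt [U_orth _] _ n i /=.
have [alpha_le1 alpha_small] : alpha <= 1 /\ d%:R * alpha <= 2^-1.
  move: alpha_lt; rewrite -[X in _ < X]div1r ltr_pdivlMr ?mulr_gt0 ?ltr_wpDl //.
  by have := mulr_ge0 (ler0n R d) (ltW alpha_gt0); lra.
have E_le : colnorm (U0 *m expm (alpha *: X) - U0) i <= alpha + K * alpha ^+ 2.
  rewrite -{2}[U0]mulmx1 -mulmxBr colnorm_mul_orthogonal //.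
  by apply: colnorm_expm_sub1_le; rewrite ?X_unit ?(ltW alpha_gt0).
have U0_le : colnorm U0 i <= 1 by rewrite colnorm_orthogonal.
apply: le_trans (normr_diag_perturb_le _ _ (ltW sigma_gt0) U_orth U0_le E_le) _.
rewrite [leRHS]addrAC lerD2r.
have Mn_le : frob (M n) <= \sum_(n < N) frob (M n).
  by rewrite (bigD1 n) //= lerDl sumr_ge0 // => k _; exact: sqrtr_ge0.
have coef_le := quadratic_coef_le K_ge0 (ltW alpha_gt0) alpha_le1.
apply: le_trans (ler_wpM2r (sqrtr_ge0 _) coef_le) _.
rewrite mulrDl lerD2l mulrAC; apply: ler_wpM2r; first exact: sqr_ge0.
by apply: ler_wpM2l Mn_le; have := sqr_ge0 (1 + K); lra.
Qed.
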